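(* Let $\beta>1$, $I_L=\bigcup_{k\in\mathbb{N}}(2k+1,2k+2)$, $I_D=\bigcup_{k\in\mathbb{N}}(2k,2k+1)$. Then: (i) $l_t(t,\beta)=\sqrt{1-\hat\sigma^2(t,\beta)}-1$ for every $t\in I_L$; (ii) $l_t(t,\beta)=\sqrt{\beta^2-\hat\sigma^2(t,\beta)}-1$ for every $t\in I_D$; (iii) $l(\cdot,\beta)$ is strictly convex on each of the open intervals composing $I_L\cup I_D$; (iv) $l(\cdot,\beta)$ is strictly decreasing on each of the open intervals composing $I_L$; (v) if $\beta\ge\sqrt{3/2}$, then $l(\cdot,\beta)$ is strictly increasing on each of the open intervals composing $I_D$; (vi) if $1<\beta<\sqrt{3/2}$, then there exists a unique $t_0>0$, characterized by $\hat\sigma(t_0,\beta)=\sqrt{\beta^2-1}$, such that $l_t(t,\beta)<0$ for all $t\in[0,t_0)\cap I_D$ and $l_t(t,\beta)>0$ for all $t\in(t_0,+\infty)\cap I_D$.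
   Context: $\mathbb{N}=\{0,1,2,\dots\}$. For $t\ge 0$ let $q(t)=\lfloor t+1\rfloor/2$ if $\lfloor t\rfloor$ is odd and $q(t)=t-\lfloor t\rfloor/2$ if $\lfloor t\rfloor$ is even, and $p(t)=t+1-q(t)$. For $\beta\ge1$ let $\hat\sigma(t,\beta)\in(0,1)$ be the unique solution $\sigma$ of $\frac{p(t)\sigma}{\sqrt{1-\sigma^2}}+\frac{q(t)\sigma}{\sqrt{\beta^2-\sigma^2}}=1$. The normalized length is $l(t,\beta)=\frac{p(t)}{\sqrt{1-\hat\sigma^2}}+\frac{\beta^2q(t)}{\sqrt{\beta^2-\hat\sigma^2}}-t-\sqrt2$, $\hat\sigma=\hat\sigma(t,\beta)$; $l_t$ denotes its partial derivative in $t$. *)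

From Stdlib Require Import Reals Lra ZArith ClassicalEpsilon.
From Coquelicot Require Import Coquelicot.
Open Scope R_scope.

(* floor t = Int_part t (Stdlib: Int_part x = up x - 1, the integer part). *)
Definition qf (t : R) : R :=
  if Z.odd (Int_part t) then IZR (Int_part t + 1) / 2
  else t - IZR (Int_part t) / 2.

Definition pf (t : R) : R := t + 1 - qf t.

Definition sigma_eq (t beta s : R) : Prop :=
  0 < s < 1 /\
  pf t * s / sqrt (1 - s ^ 2) + qf t * s / sqrt (beta ^ 2 - s ^ 2) = 1.

Definition sigma_hat (t beta : R) : R :=
  epsilon (inhabits 0) (fun s => sigma_eq t beta s).

Definition lnorm (t beta : R) : R :=
  let s := sigma_hat t beta in
  pf t / sqrt (1 - s ^ 2) + beta ^ 2 * qf t / sqrt (beta ^ 2 - s ^ 2)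
  - t - sqrt 2.

Definition l_t (t beta : R) : R := Derive (fun u => lnorm u beta) t.

Definition strictly_convex_on (f : R -> R) (a b : R) : Prop :=
  forall x y lam, a < x < b -> a < y < b -> x <> y -> 0 < lam < 1 ->
    f (lam * x + (1 - lam) * y) < lam * f x + (1 - lam) * f y.

Definition strictly_decreasing_on (f : R -> R) (a b : R) : Prop :=
  forall x y, a < x < b -> a < y < b -> x < y -> f y < f x.

Definition strictly_increasing_on (f : R -> R) (a b : R) : Prop :=
  forall x y, a < x < b -> a < y < b -> x < y -> f x < f y.

Definition in_IL (t : R) : Prop :=
  exists k : nat, 2 * INR k + 1 < t < 2 * INR k + 2.
Definition in_ID (t : R) : Prop :=
  exists k : nat, 2 * INR k < t < 2 * INR k + 1.

(* On each interval of I_L or I_D the coefficients p(t), q(t) are affine in t, and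
   l(t, β) + t + √2 is the maximum over x ∈ [0,1] of
   E(x) = p√(1 - x²) + q√(β² - x²) + x, attained at x = σ̂ (the equation for σ̂ is
   E'(x) = 0 rewritten). As a supremum of functions affine in t, l is convex on each
   interval, and the slope of the affine function selected by σ̂(t) is a subgradient:
   √(1 - σ̂²) - 1 on I_L, √(β² - σ̂²) - 1 on I_D. Since p and q are nondecreasing with
   p + q = t + 1, σ̂ is strictly decreasing and Lipschitz in t, so the subgradient is
   continuous (hence the derivative) and strictly increasing (hence strict convexity).
   The signs follow from σ̂ < 1, from σ̂² < 1/2, and from the monotonicity of σ̂. *)

From Stdlib Require Import Reals Lra Lia Psatz ZArith ClassicalEpsilon.
From Coquelicot Require Import Coquelicot.
Open Scope R_scope.

(** * The coefficients p and q *)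

Lemma qf_floor_half (t : R) :
  let m := Z.div2 (Int_part t) in
  2 * IZR m <= t < 2 * IZR m + 2 /\ qf t = Rmin (t - IZR m) (IZR m + 1).
Proof.
  intros m. destruct (base_Int_part t) as [H1 H2].
  pose proof (Z.div2_odd (Int_part t)) as E. fold m in E.
  unfold qf. destruct (Z.odd (Int_part t)); cbn [Z.b2z] in E;
    rewrite E in H1, H2 |- *; rewrite ?plus_IZR, ?mult_IZR in *;
    (split; [lra | unfold Rmin; destruct Rle_dec; lra]).
Qed.

Lemma qf_on_block (j : Z) (t : R) : 2 * IZR j <= t <= 2 * IZR j + 2 ->
  qf t = Rmin (t - IZR j) (IZR j + 1).
Proof.
  intros Ht. destruct (qf_floor_half t) as [[H1 H2] ->].
  set (m := Z.div2 (Int_part t)) in *.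
  assert (Hm : (j <= m <= j + 1)%Z).
  { split.
    - apply Z.lt_succ_r, lt_IZR. rewrite succ_IZR. lra.
    - apply le_IZR. rewrite plus_IZR. lra. }
  destruct (Z.eq_dec m j) as [->|Hne]; [reflexivity|].
  assert (m = j + 1)%Z as -> by lia. rewrite plus_IZR in *.
  unfold Rmin; repeat destruct Rle_dec; lra.
Qed.

Lemma pf_qf_on_ID (k : nat) (t : R) : 2 * INR k <= t <= 2 * INR k + 1 ->
  pf t = INR k + 1 /\ qf t = t - INR k.
Proof.
  intros Ht. rewrite INR_IZR_INZ in *.
  assert (Hq : qf t = t - IZR (Z.of_nat k)).
  { rewrite (qf_on_block (Z.of_nat k)) by lra. unfold Rmin; destruct Rle_dec; lra. }
  unfold pf. rewrite Hq. split; ring.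
Qed.

Lemma pf_qf_on_IL (k : nat) (t : R) : 2 * INR k + 1 <= t <= 2 * INR k + 2 ->
  pf t = t - INR k /\ qf t = INR k + 1.
Proof.
  intros Ht. rewrite INR_IZR_INZ in *.
  assert (Hq : qf t = IZR (Z.of_nat k) + 1).
  { rewrite (qf_on_block (Z.of_nat k)) by lra. unfold Rmin; destruct Rle_dec; lra. }
  unfold pf. rewrite Hq. split; ring.
Qed.

Lemma pf_qf_bounds (t : R) : 0 <= t -> 1 <= pf t /\ 0 <= qf t.
Proof.
  intros Ht. destruct (qf_floor_half t) as [[H1 H2] E].
  set (m := Z.div2 (Int_part t)) in *.
  assert (Hm : 0 <= IZR m).
  { apply IZR_le, Z.lt_succ_r, lt_IZR. rewrite succ_IZR. simpl. lra. }
  unfold pf. rewrite E. unfold Rmin; destruct Rle_dec; lra.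
Qed.

Lemma pf_qf_monotone (x y : R) : x <= y -> qf x <= qf y /\ pf x <= pf y.
Proof.
  intros Hxy. unfold pf.
  destruct (qf_floor_half x) as [[H1 H2] ->]. destruct (qf_floor_half y) as [[H1' H2'] ->].
  set (m := Z.div2 (Int_part x)) in *. set (m' := Z.div2 (Int_part y)) in *.
  destruct (Z.lt_total m m') as [L|[L|L]].
  - assert (IZR m + 1 <= IZR m') by (rewrite <- plus_IZR; apply IZR_le; lia).
    unfold Rmin; repeat destruct Rle_dec; lra.
  - rewrite L. unfold Rmin; repeat destruct Rle_dec; lra.
  - assert (IZR m' + 1 <= IZR m) by (rewrite <- plus_IZR; apply IZR_le; lia). lra.
Qed.

Lemma pf_qf_increments (x y : R) : x <= y ->
  0 <= pf y - pf x <= y - x /\ 0 <= qf y - qf x <= y - x.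
Proof. intros Hxy. destruct (pf_qf_monotone x y Hxy). unfold pf in *. lra. Qed.

Lemma pf_qf_lipschitz (x y : R) :
  Rabs (pf y - pf x) <= Rabs (y - x) /\ Rabs (qf y - qf x) <= Rabs (y - x).
Proof.
  destruct (Rle_lt_dec x y) as [L|L].
  - destruct (pf_qf_increments x y L). rewrite !Rabs_pos_eq by lra. lra.
  - destruct (pf_qf_increments y x ltac:(lra)). rewrite !Rabs_left1 by lra. lra.
Qed.

Lemma continuity_of_lipschitz (f : R -> R) (K : R) :
  (forall x y, Rabs (f y - f x) <= K * Rabs (y - x)) -> continuity f.
Proof.
  intros Lip x eps Heps.
  assert (K1 : 0 < Rabs K + 1) by (pose proof (Rabs_pos K); lra).
  exists (eps / (Rabs K + 1)). split; [apply Rdiv_lt_0_compat; lra|].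
  intros y [_ Hy]. simpl in *. unfold R_dist in *.
  apply Rle_lt_trans with ((Rabs K + 1) * Rabs (y - x)).
  - pose proof (Lip x y). pose proof (Rle_abs K). pose proof (Rabs_pos (y - x)). nra.
  - apply (Rmult_lt_compat_l (Rabs K + 1)) in Hy; [|lra].
    replace ((Rabs K + 1) * (eps / (Rabs K + 1))) with eps in Hy by (field; lra). lra.
Qed.

Lemma sqrt_sub_sq_pos (c x : R) : 1 <= c -> 0 <= x < 1 -> 0 < sqrt (c - x ^ 2).
Proof. intros Hc Hx. apply sqrt_lt_R0. nra. Qed.

Lemma Rinv_sqrt_sub_sq_le (c x y : R) : 1 <= c -> 0 <= x <= y -> y < 1 ->
  / sqrt (c - x ^ 2) <= / sqrt (c - y ^ 2).
Proof.
  intros Hc Hx Hy. apply Rinv_le_contravar; [apply sqrt_sub_sq_pos; lra|].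
  apply sqrt_le_1_alt. nra.
Qed.

Lemma div_sqrt_sub_sq_le (c s : R) : 1 <= c -> 0 <= s < 1 ->
  s / sqrt (c - s ^ 2) <= s / sqrt (1 - s ^ 2).
Proof.
  intros Hc Hs. unfold Rdiv. apply Rmult_le_compat_l; [lra|].
  apply Rinv_le_contravar; [apply sqrt_sub_sq_pos; lra | apply sqrt_le_1_alt; lra].
Qed.

(* Cauchy–Schwarz for the vectors (√(c - x²), x) and (√(c - s²), s). *)
Lemma sqrt_sub_sq_mul_le (c x s : R) : 1 <= c -> 0 <= x <= 1 -> 0 <= s < 1 ->
  sqrt (c - x ^ 2) * sqrt (c - s ^ 2) <= c - s * x.
Proof.
  intros Hc Hx Hs. rewrite <- sqrt_mult by nra.
  rewrite <- (sqrt_pow2 (c - s * x)) by nra. apply sqrt_le_1_alt.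
  assert (0 <= c * (x - s) ^ 2) by (apply Rmult_le_pos; [lra | apply pow2_ge_0]). nra.
Qed.

Lemma sqrt_sub_sq_lipschitz (c x y : R) : 1 <= c -> 0 <= x < 1 -> 0 <= y < 1 ->
  Rabs (sqrt (c - y ^ 2) - sqrt (c - x ^ 2)) <= 2 / sqrt (c - x ^ 2) * Rabs (y - x).
Proof.
  intros Hc Hx Hy.
  assert (V0 : 0 < sqrt (c - x ^ 2)) by (apply sqrt_sub_sq_pos; lra).
  assert (U0 : 0 < sqrt (c - y ^ 2)) by (apply sqrt_sub_sq_pos; lra).
  assert (VV : sqrt (c - x ^ 2) * sqrt (c - x ^ 2) = c - x ^ 2) by (apply sqrt_sqrt; nra).
  assert (UU : sqrt (c - y ^ 2) * sqrt (c - y ^ 2) = c - y ^ 2) by (apply sqrt_sqrt; nra).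
  set (U := sqrt (c - y ^ 2)) in *. set (V := sqrt (c - x ^ 2)) in *.
  apply (Rmult_le_reg_r V); [exact V0|].
  replace (2 / V * Rabs (y - x) * V) with (2 * Rabs (y - x)) by (field; lra).
  assert (K : (U - V) * (U + V) = (x - y) * (x + y)) by nra.
  unfold Rabs; repeat destruct Rcase_abs; nra.
Qed.

Lemma sqrt_sub_sq_subst (c z : R) : 1 <= c ->
  sqrt (c - (z / sqrt (1 + z ^ 2)) ^ 2) = sqrt (c + (c - 1) * z ^ 2) / sqrt (1 + z ^ 2).
Proof.
  intros Hc. assert (Z : 0 < 1 + z ^ 2) by nra.
  rewrite <- sqrt_div by nra. f_equal.
  unfold Rdiv. rewrite Rpow_mult_distr, pow_inv, pow2_sqrt by lra. field. lra.
Qed.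

(** * The equation defining σ̂ *)

Definition sigma_lhs (beta P Q x : R) : R :=
  P * x / sqrt (1 - x ^ 2) + Q * x / sqrt (beta ^ 2 - x ^ 2).

Definition envelope (beta P Q x : R) : R :=
  P * sqrt (1 - x ^ 2) + Q * sqrt (beta ^ 2 - x ^ 2) + x.

Section CriticalPoint.

Variables beta P Q : R.
Hypothesis hb : 1 < beta.
Hypothesis hP : 0 <= P.
Hypothesis hQ : 0 <= Q.

Lemma sigma_lhs_increment (x y : R) : 0 <= x <= y -> y < 1 ->
  P * (y - x) <= sigma_lhs beta P Q y - sigma_lhs beta P Q x.
Proof.
  intros Hx Hy. unfold sigma_lhs, Rdiv.
  pose proof (Rinv_sqrt_sub_sq_le 1 x y ltac:(lra) Hx Hy) as I1.
  pose proof (Rinv_sqrt_sub_sq_le (beta ^ 2) x y ltac:(nra) Hx Hy) as I2.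
  assert (G1 : 1 <= / sqrt (1 - x ^ 2)).
  { rewrite <- Rinv_1. apply Rinv_le_contravar; [apply sqrt_sub_sq_pos; lra|].
    rewrite <- sqrt_1 at 2. apply sqrt_le_1_alt. nra. }
  assert (0 < / sqrt (beta ^ 2 - x ^ 2)).
  { apply Rinv_0_lt_compat, sqrt_sub_sq_pos; nra. }
  set (a := / sqrt (1 - x ^ 2)) in *. set (b := / sqrt (1 - y ^ 2)) in *.
  set (c := / sqrt (beta ^ 2 - x ^ 2)) in *. set (d := / sqrt (beta ^ 2 - y ^ 2)) in *.
  assert (E1 : y - x <= y * b - x * a) by nra.
  assert (E2 : 0 <= y * d - x * c) by nra.
  nra.
Qed.

Lemma sigma_lhs_expanding (x y : R) : 1 <= P -> 0 <= x < 1 -> 0 <= y < 1 ->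
  Rabs (y - x) <= Rabs (sigma_lhs beta P Q y - sigma_lhs beta P Q x).
Proof.
  intros HP1 Hx Hy. destruct (Rle_dec x y) as [L|L].
  - pose proof (sigma_lhs_increment x y ltac:(lra) ltac:(lra)).
    rewrite !Rabs_pos_eq by nra. nra.
  - pose proof (sigma_lhs_increment y x ltac:(lra) ltac:(lra)).
    rewrite !Rabs_left1 by nra. nra.
Qed.

(* After the substitution s = z / √(1 + z²) the equation reads
   P z + Q z / √(β² + (β² - 1) z²) = 1, which has no singularity, so the IVT applies. *)
Lemma critical_point_exists : 1 <= P -> exists s, 0 < s < 1 /\ sigma_lhs beta P Q s = 1.
Proof.
  intros HP1.
  assert (Tsq : forall z, 0 < beta ^ 2 + (beta ^ 2 - 1) * z ^ 2).
  { intros z. assert (0 <= (beta ^ 2 - 1) * z ^ 2) by (apply Rmult_le_pos; nra). nra. }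
  set (T := fun z => sqrt (beta ^ 2 + (beta ^ 2 - 1) * z ^ 2)).
  assert (Tpos : forall z, 0 < T z) by (intros z; apply sqrt_lt_R0, Tsq).
  set (f := fun z => P * z + Q * z / T z - 1).
  assert (Hc : continuity f).
  { intros z. apply continuity_pt_filterlim.
    apply (@ex_derive_continuous R_AbsRing R_NormedModule f z).
    pose proof (Tsq z) as Hz. simpl in Hz.
    unfold f, T. auto_derive. split; [exact Hz|].
    split; [apply Rgt_not_eq, sqrt_lt_R0, Hz | exact I]. }
  assert (F0 : f 0 < 0) by (unfold f, Rdiv; lra).
  assert (F2 : 0 < f 2).
  { unfold f. assert (0 <= Q * 2 / T 2) by (apply Rdiv_le_0_compat; [lra | apply Tpos]).
    lra. }
  destruct (IVT f 0 2 Hc ltac:(lra) F0 F2) as [z [Hz Fz]].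
  assert (Hz0 : 0 < z).
  { destruct (Req_dec z 0) as [E|E]; [|lra]. subst z. unfold f, Rdiv in Fz. lra. }
  set (S := sqrt (1 + z ^ 2)).
  assert (S0 : 0 < S) by (apply sqrt_lt_R0; nra).
  assert (Sz : z < S).
  { rewrite <- (sqrt_pow2 z) by lra. apply sqrt_lt_1_alt. nra. }
  exists (z / S). split.
  - split; [apply Rdiv_lt_0_compat; lra|].
    apply (Rmult_lt_reg_r S); [lra|]. unfold Rdiv. rewrite Rmult_assoc, Rinv_l; lra.
  - unfold sigma_lhs. rewrite !sqrt_sub_sq_subst by nra. fold S.
    replace (1 + (1 - 1) * z ^ 2) with 1 by ring. rewrite sqrt_1.
    fold (T z). pose proof (Tpos z).
    assert (E : P * (z / S) / (1 / S) + Q * (z / S) / (T z / S) = P * z + Q * z / T z).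
    { field. split; lra. }
    rewrite E. unfold f in Fz. lra.
Qed.

Lemma envelope_at_critical (s : R) : 0 < s < 1 -> sigma_lhs beta P Q s = 1 ->
  P / sqrt (1 - s ^ 2) + beta ^ 2 * Q / sqrt (beta ^ 2 - s ^ 2) = envelope beta P Q s.
Proof.
  intros Hs E. unfold sigma_lhs, envelope in *.
  assert (U0 : 0 < sqrt (1 - s ^ 2)) by (apply sqrt_sub_sq_pos; lra).
  assert (V0 : 0 < sqrt (beta ^ 2 - s ^ 2)) by (apply sqrt_sub_sq_pos; nra).
  assert (UU : sqrt (1 - s ^ 2) * sqrt (1 - s ^ 2) = 1 - s ^ 2) by (apply sqrt_sqrt; nra).
  assert (VV : sqrt (beta ^ 2 - s ^ 2) * sqrt (beta ^ 2 - s ^ 2) = beta ^ 2 - s ^ 2)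
    by (apply sqrt_sqrt; nra).
  set (u := sqrt (1 - s ^ 2)) in *. set (v := sqrt (beta ^ 2 - s ^ 2)) in *.
  assert (A1 : P / u = P * u + s * (P * s / u)).
  { replace (P / u) with (P * (u * u + s ^ 2) / u) by (rewrite UU; f_equal; ring).
    field. lra. }
  assert (A2 : beta ^ 2 * Q / v = Q * v + s * (Q * s / v)).
  { replace (beta ^ 2 * Q / v) with (Q * (v * v + s ^ 2) / v) by (rewrite VV; f_equal; ring).
    field. lra. }
  rewrite A1, A2. transitivity (P * u + Q * v + s * (P * s / u + Q * s / v)); [ring|].
  rewrite E. ring.
Qed.

Lemma envelope_le_critical (s x : R) : 0 < s < 1 -> sigma_lhs beta P Q s = 1 ->
  0 <= x <= 1 -> envelope beta P Q x <= envelope beta P Q s.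
Proof.
  intros Hs E Hx. rewrite <- (envelope_at_critical s Hs E).
  assert (U0 : 0 < sqrt (1 - s ^ 2)) by (apply sqrt_sub_sq_pos; lra).
  assert (V0 : 0 < sqrt (beta ^ 2 - s ^ 2)) by (apply sqrt_sub_sq_pos; nra).
  pose proof (sqrt_sub_sq_mul_le 1 x s ltac:(lra) Hx ltac:(lra)) as C1.
  pose proof (sqrt_sub_sq_mul_le (beta ^ 2) x s ltac:(nra) Hx ltac:(lra)) as C2.
  unfold sigma_lhs, envelope in *.
  set (u := sqrt (1 - s ^ 2)) in *. set (v := sqrt (beta ^ 2 - s ^ 2)) in *.
  assert (D1 : P * sqrt (1 - x ^ 2) <= P / u - x * (P * s / u)).
  { apply (Rmult_le_reg_r u); [exact U0|].
    replace ((P / u - x * (P * s / u)) * u) with (P * (1 - s * x)) by (field; lra).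
    rewrite Rmult_assoc. apply Rmult_le_compat_l; lra. }
  assert (D2 : Q * sqrt (beta ^ 2 - x ^ 2) <= beta ^ 2 * Q / v - x * (Q * s / v)).
  { apply (Rmult_le_reg_r v); [exact V0|].
    replace ((beta ^ 2 * Q / v - x * (Q * s / v)) * v) with (Q * (beta ^ 2 - s * x))
      by (field; lra).
    rewrite Rmult_assoc. apply Rmult_le_compat_l; lra. }
  assert (x * (P * s / u) + x * (Q * s / v) = x) by (rewrite <- Rmult_plus_distr_l, E; ring).
  lra.
Qed.

Lemma critical_point_sq_lt_half (s : R) : 1 <= P -> 1 < P + Q -> 0 < s < 1 ->
  sigma_lhs beta P Q s = 1 -> s ^ 2 < 1 / 2.
Proof.
  intros HP1 HPQ Hs E. unfold sigma_lhs in E.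
  assert (U0 : 0 < sqrt (1 - s ^ 2)) by (apply sqrt_sub_sq_pos; lra).
  assert (V0 : 0 < sqrt (beta ^ 2 - s ^ 2)) by (apply sqrt_sub_sq_pos; nra).
  set (u := sqrt (1 - s ^ 2)) in *. set (v := sqrt (beta ^ 2 - s ^ 2)) in *.
  destruct (Rlt_le_dec (s ^ 2) (1 / 2)) as [L|L]; [exact L|exfalso].
  assert (us : u <= s).
  { unfold u. apply Rle_trans with (sqrt (s ^ 2)); [apply sqrt_le_1_alt; lra|].
    rewrite sqrt_pow2; lra. }
  assert (a1 : 1 <= s / u).
  { apply (Rmult_le_reg_r u); [exact U0|]. unfold Rdiv. rewrite Rmult_assoc, Rinv_l; lra. }
  assert (b0 : 0 < s / v) by (apply Rdiv_lt_0_compat; lra).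
  replace (P * s / u + Q * s / v) with (P * (s / u) + Q * (s / v)) in E by (unfold Rdiv; ring).
  assert (P <= P * (s / u)) by nra.
  assert (0 < Q * (s / v)) by (apply Rmult_lt_0_compat; nra).
  lra.
Qed.

End CriticalPoint.

Section SigmaHat.

Variable beta : R.
Hypothesis hb : 1 < beta.

Lemma sigma_hat_spec (t : R) : 0 <= t ->
  0 < sigma_hat t beta < 1 /\ sigma_lhs beta (pf t) (qf t) (sigma_hat t beta) = 1.
Proof.
  intros Ht. destruct (pf_qf_bounds t Ht) as [HP HQ].
  exact (epsilon_spec (inhabits 0) (sigma_eq t beta)
           (critical_point_exists beta (pf t) (qf t) hb HQ HP)).
Qed.

Lemma sigma_hat_unique (t s : R) : 0 <= t -> 0 < s < 1 ->
  sigma_lhs beta (pf t) (qf t) s = 1 -> sigma_hat t beta = s.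
Proof.
  intros Ht Hs E. destruct (sigma_hat_spec t Ht) as [Hs' E'].
  destruct (pf_qf_bounds t Ht) as [HP HQ].
  pose proof (sigma_lhs_expanding beta (pf t) (qf t) hb ltac:(lra) HQ s (sigma_hat t beta)
                HP ltac:(lra) ltac:(lra)) as X.
  rewrite E, E', Rminus_diag, Rabs_R0 in X.
  unfold Rabs in X. destruct Rcase_abs in X; lra.
Qed.

Lemma lnorm_envelope (t : R) : 0 <= t ->
  lnorm t beta = envelope beta (pf t) (qf t) (sigma_hat t beta) - t - sqrt 2.
Proof.
  intros Ht. destruct (sigma_hat_spec t Ht) as [Hs E].
  unfold lnorm. cbv zeta. rewrite envelope_at_critical; auto.
Qed.

Lemma lnorm_increment_ge (t t' : R) : 0 <= t -> 0 <= t' ->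
  let s := sigma_hat t beta in
  (pf t' - pf t) * sqrt (1 - s ^ 2) + (qf t' - qf t) * sqrt (beta ^ 2 - s ^ 2) - (t' - t)
  <= lnorm t' beta - lnorm t beta.
Proof.
  intros Ht Ht' s. destruct (sigma_hat_spec t Ht) as [Hs _]. fold s in Hs.
  destruct (sigma_hat_spec t' Ht') as [Hs' E']. destruct (pf_qf_bounds t' Ht') as [HP HQ].
  pose proof (envelope_le_critical beta (pf t') (qf t') hb ltac:(lra) HQ _ s Hs' E'
                ltac:(lra)) as X.
  rewrite !lnorm_envelope by assumption. fold s. unfold envelope in *. lra.
Qed.

(* [sigma_lhs] is affine in (P, Q); p and q move in the same direction with total increment
   t' - t, and the coefficient of p is the larger one. *)
Lemma sigma_lhs_defect (t t' : R) : 0 <= t ->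
  let s := sigma_hat t beta in
  Rabs (sigma_lhs beta (pf t') (qf t') s - 1) <= s / sqrt (1 - s ^ 2) * Rabs (t' - t) /\
  (t < t' -> 1 < sigma_lhs beta (pf t') (qf t') s).
Proof.
  intros Ht s. destruct (sigma_hat_spec t Ht) as [Hs E]. fold s in Hs, E.
  assert (b0 : 0 < s / sqrt (beta ^ 2 - s ^ 2))
    by (apply Rdiv_lt_0_compat, sqrt_sub_sq_pos; nra).
  pose proof (div_sqrt_sub_sq_le (beta ^ 2) s ltac:(nra) ltac:(lra)) as ba.
  assert (D : sigma_lhs beta (pf t') (qf t') s - 1 =
              (pf t' - pf t) * (s / sqrt (1 - s ^ 2)) +
              (qf t' - qf t) * (s / sqrt (beta ^ 2 - s ^ 2))).
  { rewrite <- E at 1. unfold sigma_lhs, Rdiv. ring. }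
  rewrite D. set (a := s / sqrt (1 - s ^ 2)) in *. set (b := s / sqrt (beta ^ 2 - s ^ 2)) in *.
  destruct (Rle_lt_dec t t') as [L|L].
  - destruct (pf_qf_increments t t' L) as [Ip Iq].
    assert (pf t' - pf t + (qf t' - qf t) = t' - t) by (unfold pf; ring).
    rewrite !Rabs_pos_eq by nra. split; [nra | intros; nra].
  - destruct (pf_qf_increments t' t ltac:(lra)) as [Ip Iq].
    assert (pf t - pf t' + (qf t - qf t') = t - t') by (unfold pf; ring).
    rewrite !Rabs_left1 by nra. split; [nra | intros; lra].
Qed.

Lemma sigma_hat_decreasing (t t' : R) : 0 <= t -> t < t' ->
  sigma_hat t' beta < sigma_hat t beta.
Proof.
  intros Ht Htt. destruct (sigma_lhs_defect t t' Ht) as [_ D]. specialize (D Htt).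
  destruct (sigma_hat_spec t Ht) as [Hs _]. destruct (sigma_hat_spec t' ltac:(lra)) as [Hs' E'].
  destruct (pf_qf_bounds t' ltac:(lra)) as [HP HQ].
  destruct (Rlt_le_dec (sigma_hat t' beta) (sigma_hat t beta)) as [L|L]; [exact L|].
  pose proof (sigma_lhs_increment beta (pf t') (qf t') hb ltac:(lra) HQ
                (sigma_hat t beta) (sigma_hat t' beta) ltac:(lra) ltac:(lra)).
  nra.
Qed.

Lemma sigma_hat_lipschitz (t t' : R) : 0 <= t -> 0 <= t' ->
  let s := sigma_hat t beta in
  Rabs (sigma_hat t' beta - s) <= s / sqrt (1 - s ^ 2) * Rabs (t' - t).
Proof.
  intros Ht Ht' s. destruct (sigma_lhs_defect t t' Ht) as [D _].
  destruct (sigma_hat_spec t Ht) as [Hs _]. destruct (sigma_hat_spec t' Ht') as [Hs' E'].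
  destruct (pf_qf_bounds t' Ht') as [HP HQ].
  pose proof (sigma_lhs_expanding beta (pf t') (qf t') hb ltac:(lra) HQ s (sigma_hat t' beta)
                HP ltac:(fold s in Hs; lra) ltac:(lra)) as X.
  rewrite E', (Rabs_minus_sym 1) in X. fold s in D. lra.
Qed.

Lemma sigma_hat_sq_lt_half (t : R) : 0 < t -> sigma_hat t beta ^ 2 < 1 / 2.
Proof.
  intros Ht. destruct (sigma_hat_spec t ltac:(lra)) as [Hs E].
  destruct (pf_qf_bounds t ltac:(lra)) as [HP HQ].
  apply (critical_point_sq_lt_half beta (pf t) (qf t)); auto; unfold pf; lra.
Qed.

Lemma sigma_lhs_pf_qf_continuity (s : R) : 0 <= s < 1 ->
  continuity (fun t => sigma_lhs beta (pf t) (qf t) s).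
Proof.
  intros Hs. set (a := s / sqrt (1 - s ^ 2)). set (b := s / sqrt (beta ^ 2 - s ^ 2)).
  assert (a0 : 0 <= a) by (apply Rdiv_le_0_compat, sqrt_sub_sq_pos; lra).
  assert (b0 : 0 <= b) by (apply Rdiv_le_0_compat, sqrt_sub_sq_pos; nra).
  apply (continuity_of_lipschitz _ (a + b)). intros x y.
  destruct (pf_qf_lipschitz x y) as [Lp Lq].
  replace (sigma_lhs beta (pf y) (qf y) s - sigma_lhs beta (pf x) (qf x) s)
    with (a * (pf y - pf x) + b * (qf y - qf x)) by (unfold sigma_lhs, a, b, Rdiv; ring).
  eapply Rle_trans; [apply Rabs_triang|].
  rewrite !Rabs_mult, (Rabs_pos_eq a), (Rabs_pos_eq b) by lra. nra.
Qed.

(* σ̂(t) = s means a p(t) + b q(t) = 1 with b <= a < 1, and the left-hand side is continuous,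
   equals a at t = 0 and is at least b (t + 1). *)
Lemma sigma_hat_onto (s : R) : 0 < s -> s ^ 2 < 1 / 2 ->
  exists t, 0 < t /\ sigma_hat t beta = s.
Proof.
  intros Hs Hs2.
  assert (U0 : 0 < sqrt (1 - s ^ 2)) by (apply sqrt_lt_R0; lra).
  set (a := s / sqrt (1 - s ^ 2)). set (b := s / sqrt (beta ^ 2 - s ^ 2)).
  assert (b0 : 0 < b) by (apply Rdiv_lt_0_compat, sqrt_sub_sq_pos; nra).
  pose proof (div_sqrt_sub_sq_le (beta ^ 2) s ltac:(nra) ltac:(nra)) as ba. fold a b in ba.
  assert (a1 : a < 1).
  { assert (s < sqrt (1 - s ^ 2)).
    { rewrite <- (sqrt_pow2 s) at 1 by lra. apply sqrt_lt_1_alt. nra. }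
    apply (Rmult_lt_reg_r (sqrt (1 - s ^ 2))); [exact U0|].
    unfold a, Rdiv. rewrite Rmult_assoc, Rinv_l; lra. }
  set (phi := fun t => sigma_lhs beta (pf t) (qf t) s - 1).
  assert (Ephi : forall t, phi t = a * pf t + b * qf t - 1)
    by (intros t; unfold phi, sigma_lhs, a, b, Rdiv; ring).
  assert (Hc : continuity phi).
  { apply continuity_minus; [apply sigma_lhs_pf_qf_continuity; nra | apply continuity_const].
    intros x y. reflexivity. }
  assert (F0 : phi 0 < 0).
  { destruct (pf_qf_on_ID 0 0 ltac:(simpl; lra)) as [P0 Q0].
    rewrite Ephi, P0, Q0. simpl. lra. }
  assert (FN : 0 < phi (/ b)).
  { assert (N0 : 0 < / b) by (apply Rinv_0_lt_compat; lra).
    destruct (pf_qf_bounds (/ b) ltac:(lra)) as [HP HQ].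
    assert (pf (/ b) + qf (/ b) = / b + 1) by (unfold pf; ring).
    assert (b * / b = 1) by (field; lra).
    rewrite Ephi. nra. }
  destruct (IVT phi 0 (/ b) Hc ltac:(apply Rinv_0_lt_compat; lra) F0 FN) as [t [Ht Ft]].
  assert (t0 : 0 < t).
  { destruct (Req_dec t 0) as [E|E]; [|lra]. rewrite E in Ft. lra. }
  exists t. split; [exact t0|].
  apply sigma_hat_unique; [lra | nra |]. unfold phi in Ft. lra.
Qed.

End SigmaHat.

(** * Subgradients *)

Definition subgradient_on (f g : R -> R) (a b : R) : Prop :=
  forall y z, a < y < b -> a < z < b -> (z - y) * g y <= f z - f y.

Section Subgradient.

Variables (f g : R -> R) (a b : R).
Hypothesis f_subgradient : subgradient_on f g a b.

Lemma subgradient_quotient_between (x h : R) : a < x < b -> a < x + h < b -> h <> 0 ->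
  Rabs ((f (x + h) - f x) / h - g x) <= Rabs (g (x + h) - g x).
Proof.
  intros Hx Hxh Hh.
  pose proof (f_subgradient x (x + h) Hx Hxh) as S1.
  pose proof (f_subgradient (x + h) x Hxh Hx) as S2.
  replace (x + h - x) with h in S1 by ring. replace (x - (x + h)) with (- h) in S2 by ring.
  set (D := (f (x + h) - f x) / h).
  assert (DE : f (x + h) - f x = D * h) by (unfold D; field; exact Hh).
  destruct (Rlt_le_dec 0 h) as [P|P].
  - assert (g x <= D) by nra. assert (D <= g (x + h)) by nra.
    rewrite !Rabs_pos_eq by lra. lra.
  - assert (D <= g x) by nra. assert (g (x + h) <= D) by nra.
    rewrite !Rabs_left1 by lra. lra.
Qed.

Lemma is_derive_of_subgradient (x K : R) : a < x < b ->
  (forall y, a < y < b -> Rabs (g y - g x) <= K * Rabs (y - x)) -> is_derive f x (g x).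
Proof.
  intros Hx Lip. apply is_derive_Reals. intros eps Heps.
  assert (K1 : 0 < Rabs K + 1) by (pose proof (Rabs_pos K); lra).
  set (d := Rmin (Rmin (x - a) (b - x)) (eps / (Rabs K + 1))).
  assert (d0 : 0 < d) by (apply Rmin_pos; [apply Rmin_pos; lra | apply Rdiv_lt_0_compat; lra]).
  exists (mkposreal d d0). simpl. intros h h0 Hh.
  assert (d1 : d <= Rmin (x - a) (b - x)) by apply Rmin_l.
  assert (d2 : d <= eps / (Rabs K + 1)) by apply Rmin_r.
  pose proof (Rmin_l (x - a) (b - x)). pose proof (Rmin_r (x - a) (b - x)).
  assert (Hxh : a < x + h < b) by (revert Hh; unfold Rabs; destruct Rcase_abs; intros; lra).
  eapply Rle_lt_trans; [apply (subgradient_quotient_between x h Hx Hxh h0)|].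
  eapply Rle_lt_trans; [apply Lip; exact Hxh|]. replace (x + h - x) with h by ring.
  apply Rle_lt_trans with ((Rabs K + 1) * Rabs h).
  - pose proof (Rle_abs K). pose proof (Rabs_pos h). nra.
  - apply (Rmult_lt_compat_l (Rabs K + 1)) in Hh; [|exact K1].
    apply (Rmult_le_compat_l (Rabs K + 1)) in d2; [|lra].
    replace ((Rabs K + 1) * (eps / (Rabs K + 1))) with eps in d2 by (field; lra). lra.
Qed.

(* Strictness comes from the midpoint w of [y, z], where g differs strictly from g y. *)
Lemma subgradient_strict (y z : R) :
  (forall u v, a < u < b -> a < v < b -> u < v -> g u < g v) ->
  a < y < b -> a < z < b -> y <> z -> (z - y) * g y < f z - f y.
Proof.
  intros Inc Hy Hz Hyz. set (w := (y + z) / 2).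
  assert (Hw : a < w < b) by (unfold w; lra).
  pose proof (f_subgradient w z Hw Hz). pose proof (f_subgradient y w Hy Hw).
  assert (0 < (z - w) * (g w - g y)).
  { destruct (Rlt_le_dec y z).
    - pose proof (Inc y w Hy Hw ltac:(unfold w; lra)). apply Rmult_lt_0_compat; unfold w in *; lra.
    - pose proof (Inc w y Hw Hy ltac:(unfold w; lra)).
      replace ((z - w) * (g w - g y)) with ((w - z) * (g y - g w)) by ring.
      apply Rmult_lt_0_compat; unfold w in *; lra. }
  unfold w in *. nra.
Qed.

Lemma strictly_convex_of_subgradient :
  (forall u v, a < u < b -> a < v < b -> u < v -> g u < g v) -> strictly_convex_on f a b.
Proof.
  intros Inc x y lam Hx Hy Hxy Hl. set (z := lam * x + (1 - lam) * y).
  assert (Hz : a < z < b).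
  { unfold z. split; destruct (Rle_dec x y); nra. }
  assert (zx : z <> x) by (unfold z; intros E; apply Hxy; nra).
  assert (zy : z <> y) by (unfold z; intros E; apply Hxy; nra).
  pose proof (Rmult_lt_compat_l lam _ _ ltac:(lra) (subgradient_strict z x Inc Hz Hx zx)).
  pose proof (Rmult_lt_compat_l (1 - lam) _ _ ltac:(lra) (subgradient_strict z y Inc Hz Hy zy)).
  assert (lam * ((x - z) * g z) + (1 - lam) * ((y - z) * g z) = 0)
    by (unfold z; ring).
  lra.
Qed.

Lemma strictly_decreasing_of_subgradient :
  (forall u, a < u < b -> g u < 0) -> strictly_decreasing_on f a b.
Proof.
  intros Neg x y Hx Hy Hxy. pose proof (f_subgradient y x Hy Hx). pose proof (Neg y Hy). nra.
Qed.

Lemma strictly_increasing_of_subgradient :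
  (forall u, a < u < b -> 0 < g u) -> strictly_increasing_on f a b.
Proof.
  intros Pos x y Hx Hy Hxy. pose proof (f_subgradient x y Hx Hy). pose proof (Pos x Hx). nra.
Qed.

End Subgradient.

(** * The slopes of l *)

Definition lnorm_slope (beta c t : R) : R := sqrt (c - sigma_hat t beta ^ 2) - 1.

Section Slopes.

Variable beta : R.
Hypothesis hb : 1 < beta.

Lemma lnorm_subgradient_IL (k : nat) :
  subgradient_on (fun u => lnorm u beta) (lnorm_slope beta 1) (2 * INR k + 1) (2 * INR k + 2).
Proof.
  intros y z Hy Hz. pose proof (pos_INR k).
  pose proof (lnorm_increment_ge beta hb y z ltac:(lra) ltac:(lra)) as X. cbv zeta in X.
  destruct (pf_qf_on_IL k y ltac:(lra)) as [Py Qy].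
  destruct (pf_qf_on_IL k z ltac:(lra)) as [Pz Qz].
  rewrite Py, Qy, Pz, Qz in X. unfold lnorm_slope. lra.
Qed.

Lemma lnorm_subgradient_ID (k : nat) :
  subgradient_on (fun u => lnorm u beta) (lnorm_slope beta (beta ^ 2)) (2 * INR k) (2 * INR k + 1).
Proof.
  intros y z Hy Hz. pose proof (pos_INR k).
  pose proof (lnorm_increment_ge beta hb y z ltac:(lra) ltac:(lra)) as X. cbv zeta in X.
  destruct (pf_qf_on_ID k y ltac:(lra)) as [Py Qy].
  destruct (pf_qf_on_ID k z ltac:(lra)) as [Pz Qz].
  rewrite Py, Qy, Pz, Qz in X. unfold lnorm_slope. lra.
Qed.

Lemma lnorm_slope_increasing (c y z : R) : 1 <= c -> 0 <= y < z ->
  lnorm_slope beta c y < lnorm_slope beta c z.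
Proof.
  intros Hc Hyz. unfold lnorm_slope.
  pose proof (sigma_hat_decreasing beta hb y z ltac:(lra) ltac:(lra)).
  destruct (sigma_hat_spec beta hb y ltac:(lra)) as [Hy _].
  destruct (sigma_hat_spec beta hb z ltac:(lra)) as [Hz _].
  apply Rplus_lt_compat_r, sqrt_lt_1_alt. nra.
Qed.

Lemma lnorm_slope_lipschitz (c x y : R) : 1 <= c -> 0 <= x -> 0 <= y ->
  let s := sigma_hat x beta in
  Rabs (lnorm_slope beta c y - lnorm_slope beta c x)
  <= 2 / sqrt (c - s ^ 2) * (s / sqrt (1 - s ^ 2)) * Rabs (y - x).
Proof.
  intros Hc Hx Hy s. unfold lnorm_slope. fold s.
  destruct (sigma_hat_spec beta hb x Hx) as [Hs _]. fold s in Hs.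
  destruct (sigma_hat_spec beta hb y Hy) as [Hs' _].
  replace (sqrt (c - sigma_hat y beta ^ 2) - 1 - (sqrt (c - s ^ 2) - 1))
    with (sqrt (c - sigma_hat y beta ^ 2) - sqrt (c - s ^ 2)) by ring.
  eapply Rle_trans; [apply sqrt_sub_sq_lipschitz; lra|].
  rewrite Rmult_assoc. apply Rmult_le_compat_l.
  - apply Rlt_le, Rdiv_lt_0_compat; [lra | apply sqrt_sub_sq_pos; lra].
  - apply (sigma_hat_lipschitz beta hb x y Hx Hy).
Qed.

Lemma is_derive_lnorm_on_piece (c a b x : R) : 1 <= c -> 0 <= a -> a < x < b ->
  subgradient_on (fun u => lnorm u beta) (lnorm_slope beta c) a b ->
  is_derive (fun u => lnorm u beta) x (lnorm_slope beta c x).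
Proof.
  intros Hc Ha Hx Sub. set (s := sigma_hat x beta).
  apply (is_derive_of_subgradient _ _ a b Sub x (2 / sqrt (c - s ^ 2) * (s / sqrt (1 - s ^ 2))) Hx).
  intros y Hy. apply lnorm_slope_lipschitz; lra.
Qed.

Lemma strictly_convex_lnorm_on_piece (c a b : R) : 1 <= c -> 0 <= a ->
  subgradient_on (fun u => lnorm u beta) (lnorm_slope beta c) a b ->
  strictly_convex_on (fun u => lnorm u beta) a b.
Proof.
  intros Hc Ha Sub. apply (strictly_convex_of_subgradient _ _ a b Sub).
  intros u v Hu Hv Huv. apply lnorm_slope_increasing; lra.
Qed.

Lemma lnorm_slope_1_neg (t : R) : 0 <= t -> lnorm_slope beta 1 t < 0.
Proof.
  intros Ht. destruct (sigma_hat_spec beta hb t Ht) as [Hs _]. unfold lnorm_slope.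
  assert (sqrt (1 - sigma_hat t beta ^ 2) < sqrt 1) by (apply sqrt_lt_1_alt; nra).
  rewrite sqrt_1 in *. lra.
Qed.

Lemma lnorm_slope_beta_pos (t : R) : sqrt (3 / 2) <= beta -> 0 < t ->
  0 < lnorm_slope beta (beta ^ 2) t.
Proof.
  intros Hb Ht.
  assert (3 / 2 <= beta ^ 2) by (apply sqrt_le_0; [lra | nra | rewrite sqrt_pow2; lra]).
  pose proof (sigma_hat_sq_lt_half beta hb t Ht). unfold lnorm_slope.
  assert (sqrt 1 < sqrt (beta ^ 2 - sigma_hat t beta ^ 2)) by (apply sqrt_lt_1_alt; lra).
  rewrite sqrt_1 in *. lra.
Qed.

Lemma lnorm_slope_ID_sign_change : beta < sqrt (3 / 2) ->
  exists t0, 0 < t0 /\ sigma_hat t0 beta = sqrt (beta ^ 2 - 1) /\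
    (forall t1, 0 < t1 -> sigma_hat t1 beta = sqrt (beta ^ 2 - 1) -> t1 = t0) /\
    (forall t, 0 <= t < t0 -> lnorm_slope beta (beta ^ 2) t < 0) /\
    (forall t, t0 < t -> 0 < lnorm_slope beta (beta ^ 2) t).
Proof.
  intros Hb. assert (beta ^ 2 < 3 / 2) by (apply sqrt_lt_0_alt; rewrite sqrt_pow2; lra).
  set (c := sqrt (beta ^ 2 - 1)).
  assert (cc : c ^ 2 = beta ^ 2 - 1) by (apply pow2_sqrt; nra).
  assert (c0 : 0 < c) by (apply sqrt_lt_R0; nra).
  destruct (sigma_hat_onto beta hb c c0 ltac:(lra)) as [t0 [T0 E0]].
  assert (slope_vs_c : forall t, 0 <= t -> lnorm_slope beta (beta ^ 2) t =
                         sqrt (1 + (c ^ 2 - sigma_hat t beta ^ 2)) - 1)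
    by (intros t _; unfold lnorm_slope; rewrite cc; f_equal; f_equal; ring).
  exists t0. split; [exact T0|]. split; [exact E0|]. split; [|split].
  - intros t1 T1 E1. destruct (Rtotal_order t1 t0) as [L|[L|L]]; [exfalso | exact L | exfalso].
    + pose proof (sigma_hat_decreasing beta hb t1 t0 ltac:(lra) L). lra.
    + pose proof (sigma_hat_decreasing beta hb t0 t1 ltac:(lra) L). lra.
  - intros t Ht. pose proof (sigma_hat_decreasing beta hb t t0 ltac:(lra) ltac:(lra)).
    destruct (sigma_hat_spec beta hb t ltac:(lra)) as [Hs _].
    rewrite slope_vs_c by lra.
    assert (sqrt (1 + (c ^ 2 - sigma_hat t beta ^ 2)) < sqrt 1) by (apply sqrt_lt_1_alt; nra).
    rewrite sqrt_1 in *. lra.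
  - intros t Ht. pose proof (sigma_hat_decreasing beta hb t0 t ltac:(lra) Ht).
    destruct (sigma_hat_spec beta hb t ltac:(lra)) as [Hs _].
    rewrite slope_vs_c by lra.
    assert (sqrt 1 < sqrt (1 + (c ^ 2 - sigma_hat t beta ^ 2))) by (apply sqrt_lt_1_alt; nra).
    rewrite sqrt_1 in *. lra.
Qed.

End Slopes.

Theorem lemma3p4 (beta : R) (hb : 1 < beta) :
  (forall t, in_IL t ->
     is_derive (fun u => lnorm u beta) t (sqrt (1 - (sigma_hat t beta) ^ 2) - 1)) /\
  (forall t, in_ID t ->
     is_derive (fun u => lnorm u beta) t (sqrt (beta ^ 2 - (sigma_hat t beta) ^ 2) - 1)) /\
  (forall k : nat,
     strictly_convex_on (fun u => lnorm u beta) (2 * INR k + 1) (2 * INR k + 2) /\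
     strictly_convex_on (fun u => lnorm u beta) (2 * INR k) (2 * INR k + 1)) /\
  (forall k : nat,
     strictly_decreasing_on (fun u => lnorm u beta) (2 * INR k + 1) (2 * INR k + 2)) /\
  (sqrt (3 / 2) <= beta -> forall k : nat,
     strictly_increasing_on (fun u => lnorm u beta) (2 * INR k) (2 * INR k + 1)) /\
  (beta < sqrt (3 / 2) ->
     exists t0, 0 < t0 /\ sigma_hat t0 beta = sqrt (beta ^ 2 - 1) /\
       (forall t1, 0 < t1 -> sigma_hat t1 beta = sqrt (beta ^ 2 - 1) -> t1 = t0) /\
       (forall t, 0 <= t < t0 -> in_ID t -> l_t t beta < 0) /\
       (forall t, t0 < t -> in_ID t -> l_t t beta > 0)).
Proof.
  pose proof (lnorm_subgradient_IL beta hb) as SL.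
  pose proof (lnorm_subgradient_ID beta hb) as SD.
  assert (b1 : 1 <= beta ^ 2) by nra.
  assert (DID : forall t, in_ID t ->
            is_derive (fun u => lnorm u beta) t (lnorm_slope beta (beta ^ 2) t)).
  { intros t [k Hk]. pose proof (pos_INR k).
    apply (is_derive_lnorm_on_piece beta hb _ (2 * INR k) (2 * INR k + 1)); auto; lra. }
  split; [|split; [exact DID | split; [|split; [|split]]]].
  - intros t [k Hk]. pose proof (pos_INR k).
    apply (is_derive_lnorm_on_piece beta hb _ (2 * INR k + 1) (2 * INR k + 2)); auto; lra.
  - intros k. pose proof (pos_INR k).
    split; [apply (strictly_convex_lnorm_on_piece beta hb 1) |
            apply (strictly_convex_lnorm_on_piece beta hb (beta ^ 2))]; auto; lra.
  - intros k. apply (strictly_decreasing_of_subgradient _ _ _ _ (SL k)).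
    intros u Hu. pose proof (pos_INR k). apply (lnorm_slope_1_neg beta hb); lra.
  - intros Hb k. apply (strictly_increasing_of_subgradient _ _ _ _ (SD k)).
    intros u Hu. pose proof (pos_INR k). apply (lnorm_slope_beta_pos beta hb); lra.
  - intros Hb.
    destruct (lnorm_slope_ID_sign_change beta hb Hb) as (t0 & T0 & E0 & U0 & Neg & Pos).
    assert (Lt : forall t, in_ID t -> l_t t beta = lnorm_slope beta (beta ^ 2) t)
      by (intros t HD; apply is_derive_unique, DID, HD).
    exists t0. split; [exact T0 | split; [exact E0 | split; [exact U0 | split]]];
      intros t Ht HD; rewrite Lt by exact HD; [apply Neg | apply Pos]; lra.
Qed.
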